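(* Let $p\in[1,\infty)\setminus\{2\}$, let $(X,\mathcal{B},\mu)$ and $(Y,\mathcal{C},\nu)$ be $\sigma$-finite measure spaces, and let $\lambda\mapsto s_\lambda\in L(L^p(X,\mu),L^p(Y,\nu))$, $\lambda\in[0,1]$, be a norm continuous path of surjective isometries. Let $S_\lambda$ be the spatial realization of $s_\lambda$. Then $S_0=S_1$.
   Context: By Lamperti's theorem (cited), for $p\ne2$ every surjective isometry $s$ between such $L^p$ spaces is a spatial isometry: there are a bijective measurable set transformation $S\colon\mathcal{B}/\mathcal{N}(\mu)\to\mathcal{C}/\mathcal{N}(\nu)$ (a Boolean algebra homomorphism preserving countable unions, $\mathcal{N}$ denoting null sets) and a measurable $g$ with $|g|=1$ a.e. such that $s\xi=g\,[dS_*(\mu)/d\nu]^{1/p}S_*(\xi)$, where $S_*$ is the induced linear map on measurable functions with $S_*(\chi_E)=\chi_{S(E)}$ preserving a.e. limits, and $S_*(\mu)(F)=\mu(E)$ when $S([E])=[F]$. This $S$ is uniquely determined by $s$ and is called its spatial realization. *)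

From HB Require Import structures.
From mathcomp Require Import all_boot all_order all_algebra.
From mathcomp Require Import all_classical all_reals all_analysis.
From mathcomp Require complex.
Import complex.ComplexField.
Set Implicit Arguments. Unset Strict Implicit. Unset Printing Implicit Defensive.
Import Order.TTheory GRing.Theory Num.Theory.
Import numFieldNormedType.Exports.
Local Open Scope classical_set_scope.
Local Open Scope ring_scope.

Notation Cx R := (complex.complex R).

Section Lp.
Context {R : realType}.

Definition cabs (z : Cx R) : R := complex.ComplexField.Normc.normc z.

Definition real_cx (x : R) : Cx R := complex.Complex x 0.

Definition cmeasurable d (T : measurableType d) (f : T -> Cx R) :=
  measurable_fun setT (fun x => complex.Re (f x)) /\
  measurable_fun setT (fun x => complex.Im (f x)).

Definition pint d (T : measurableType d) (m : {measure set T -> \bar R})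
  (p : R) (f : T -> Cx R) : \bar R :=
  (\int[m]_x ((cabs (f x)) `^ p)%:E)%E.

(* f is (a representative of an element) of L^p(T, m) *)
Definition inLp d (T : measurableType d) (m : {measure set T -> \bar R})
  (p : R) (f : T -> Cx R) : Prop :=
  cmeasurable f /\ (pint m p f < +oo)%E.

Definition lpnorm d (T : measurableType d) (m : {measure set T -> \bar R})
  (p : R) (f : T -> Cx R) : R := (fine (pint m p f)) `^ p^-1.

(* a.e. equality, i.e. equality in L^p *)
Definition aeeq d (T : measurableType d) (m : {measure set T -> \bar R})
  (f g : T -> Cx R) : Prop := {ae m, forall x, f x = g x}.

(* s acts on representatives and defines a bounded linear operator
   L^p(X,mu) -> L^p(Y,nu) which is an isometry onto L^p(Y,nu) *)
Definition surj_isometry d1 d2 (X : measurableType d1) (Y : measurableType d2)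
  (mu : {measure set X -> \bar R}) (nu : {measure set Y -> \bar R}) (p : R)
  (s : (X -> Cx R) -> (Y -> Cx R)) : Prop :=
  [/\ (forall f, inLp mu p f -> inLp nu p (s f)),
      (forall f g, inLp mu p f -> inLp mu p g -> aeeq mu f g ->
         aeeq nu (s f) (s g)),
      (forall (a : Cx R) f g, inLp mu p f -> inLp mu p g ->
         aeeq nu (s (fun x => a * f x + g x)) (fun y => a * s f y + s g y)),
      (forall f, inLp mu p f -> lpnorm nu p (s f) = lpnorm mu p f) &
      (forall h, inLp nu p h -> exists2 f, inLp mu p f & aeeq nu (s f) h)].

Definition norm_continuous_path d1 d2 (X : measurableType d1)
  (Y : measurableType d2)
  (mu : {measure set X -> \bar R}) (nu : {measure set Y -> \bar R}) (p : R)
  (s : R -> (X -> Cx R) -> (Y -> Cx R)) : Prop :=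
  forall l, 0 <= l <= 1 -> forall e : R, 0 < e -> exists2 delta : R, 0 < delta &
    forall l', 0 <= l' <= 1 -> `|l - l'| < delta ->
      forall f, inLp mu p f ->
        lpnorm nu p (fun y => s l f y - s l' f y) <= e * lpnorm mu p f.

(* symmetric difference of E and F is m-null: [E] = [F] in B/N(m) *)
Definition nulleq d (T : measurableType d) (m : {measure set T -> \bar R})
  (E F : set T) : Prop := m ((E `\` F) `|` (F `\` E)) = 0%E.

(* S_*(xi) = eta: for every Borel set B of reals,
   [eta^{-1}(B)] = S([xi^{-1}(B)]) (for real and imaginary parts) *)
Definition induced_map d1 d2 (X : measurableType d1) (Y : measurableType d2)
  (nu : {measure set Y -> \bar R}) (S : set X -> set Y)
  (xi : X -> Cx R) (eta : Y -> Cx R) : Prop :=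
  cmeasurable eta /\
  forall B : set R, measurable B ->
    nulleq nu ((fun y => complex.Re (eta y)) @^-1` B)
              (S ((fun x => complex.Re (xi x)) @^-1` B)) /\
    nulleq nu ((fun y => complex.Im (eta y)) @^-1` B)
              (S ((fun x => complex.Im (xi x)) @^-1` B)).

(* S (acting on representatives of B/N(mu)) is the spatial realization of s:
   a bijective measurable set transformation B/N(mu) -> C/N(nu) with
   s xi = g (dS_*(mu)/dnu)^{1/p} S_*(xi). *)
Definition spatial_realization d1 d2 (X : measurableType d1)
  (Y : measurableType d2)
  (mu : {measure set X -> \bar R}) (nu : {measure set Y -> \bar R}) (p : R)
  (s : (X -> Cx R) -> (Y -> Cx R)) (S : set X -> set Y) : Prop :=
  [/\ (forall E, measurable E -> measurable (S E)),
      [/\ (forall E E', measurable E -> measurable E' ->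
         nulleq mu E E' -> nulleq nu (S E) (S E')),
      (forall E E', measurable E -> measurable E' ->
         nulleq nu (S E) (S E') -> nulleq mu E E') &
      (forall F, measurable F -> exists2 E, measurable E & nulleq nu (S E) F)],
      ((forall E, measurable E -> nulleq nu (S (~` E)) (~` S E)) /\
      (forall E : nat -> set X, (forall n, measurable (E n)) ->
         nulleq nu (S (\bigcup_n E n)) (\bigcup_n S (E n)))) &
      exists g : Y -> Cx R, exists h : Y -> R,
        [/\ cmeasurable g, {ae nu, forall y, cabs (g y) = 1},
            (measurable_fun setT h /\ forall y, 0 <= h y),
            (* h = dS_*(mu)/dnu, where S_*(mu)(S E) = mu E *)
            (forall E, measurable E ->
               (\int[nu]_(y in S E) (h y)%:E)%E = mu E) &
            (forall xi, inLp mu p xi -> exists2 eta, induced_map nu S xi eta &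
               aeeq nu (s xi)
                 (fun y => g y * real_cx (h y `^ p^-1) * eta y))]].

End Lp.

(** If [||s_a - s_b|| <= 1/2], then [S_a E = S_b E] up to [nu]-null sets.
    Otherwise [F := S_a E \ S_b E] is non-null; writing [F = S_a E0] and
    cutting [E0 /\ E] into pieces [G] of finite measure, some [S_a G] is
    non-null.  Then [s_a 1_G] is supported in [F] and [s_b 1_G] in [S_b E],
    which is disjoint from [F], so
    [||1_G|| = ||s_a 1_G|| <= ||s_a 1_G - s_b 1_G|| <= ||1_G|| / 2] with
    [||1_G|| > 0].  By norm continuity every point of [[0, 1]] has a
    neighbourhood on which [S_l] is constant in this sense, and a supremum
    argument on [[0, 1]] carries [S_0] to [S_1]. *)
From mathcomp Require Import all_boot all_order all_algebra.
From mathcomp Require Import all_classical all_reals all_analysis.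
From mathcomp Require complex.
From mathcomp Require Import measurable_realfun lra.
Import complex.ComplexField.
Import Order.TTheory GRing.Theory Num.Theory.
Local Open Scope classical_set_scope.
Local Open Scope ring_scope.

Section nulleq.
Context {R : realType} {d : measure_display} {T : measurableType d}.
Variable m : {measure set T -> \bar R}.

Lemma measure0_ae_notin (A : set T) :
  measurable A -> {ae m, forall y, ~ A y} -> m A = 0%E.
Proof.
move=> mA; change (m.-negligible (~` [set y | ~ A y]) -> m A = 0%E).
rewrite (_ : ~` _ = A); first exact: (negligibleP _ mA).1.
by apply/seteqP; split => y /=; [move/contrapT|move=> Ay; apply].
Qed.

Lemma nulleqP {A B : set T} : measurable A -> measurable B ->
  nulleq m A B <-> {ae m, forall y, A y <-> B y}.
Proof.
move=> mA mB; rewrite /nulleq.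
change (m (A `\` B `|` B `\` A) = 0%E <->
  m.-negligible (~` [set y | A y <-> B y])).
have -> : ~` [set y | A y <-> B y] = (A `\` B) `|` (B `\` A).
  apply/seteqP; split => y /=;
  by have [] := pselect (A y); have [] := pselect (B y); tauto.
by rewrite negligibleP //; apply: measurableU; apply: measurableD.
Qed.

Lemma nulleq_sym {A B : set T} : nulleq m A B -> nulleq m B A.
Proof. by rewrite /nulleq setUC. Qed.

Lemma nulleq_trans {A B C : set T} : measurable A -> measurable B ->
  measurable C -> nulleq m A B -> nulleq m B C -> nulleq m A C.
Proof.
move=> mA mB mC; rewrite !nulleqP //.
by apply: filterS2 => y AB BC; split => [/AB/BC|/BC/AB].
Qed.

End nulleq.

Definition cindic {R : realType} {T : Type} (E : set T) : T -> Cx R :=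
  fun x => real_cx (\1_E x).

Section Lp.
Context {R : realType} {d : measure_display} {T : measurableType d}.
Context {m : {measure set T -> \bar R}} {p : R}.
Implicit Types u v : T -> Cx R.

Lemma cmeasurableB u v : cmeasurable u -> cmeasurable v ->
  cmeasurable (fun x => u x - v x).
Proof.
move=> [uRe uIm] [vRe vIm].
by split; under eq_fun do rewrite raddfB; exact: measurable_funB.
Qed.

Lemma measurable_cabs_powR u : cmeasurable u ->
  measurable_fun setT (fun x => ((cabs (u x)) `^ p)%:E).
Proof.
move=> [uRe uIm]; apply/measurable_EFinP.
apply: (measurableT_comp (measurable_powR p)).
have -> : (fun x => cabs (u x)) =
    (fun x => Num.sqrt (complex.Re (u x) ^+ 2 + complex.Im (u x) ^+ 2)).
  by apply/funext => x; case: (u x).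
apply: (measurableT_comp (continuous_measurable_fun (@sqrt_continuous R))).
by apply: measurable_funD; apply: measurable_funX.
Qed.

Lemma pint_ge0 u : (0 <= pint m p u)%E.
Proof. by apply: integral_ge0 => x _; rewrite lee_fin powR_ge0. Qed.

Lemma pint_cindic {E : set T} : p != 0 -> measurable E ->
  pint m p (cindic E) = m E.
Proof.
move=> p0 mE; rewrite /pint -[in RHS](setIT E) -integral_indic //.
apply: eq_integral => x _; rewrite /cindic indicE.
by case: (x \in E);
  rewrite /= !expr0n addr0 ?expr1n ?sqrtr1 ?sqrtr0 ?powR1 ?powR0.
Qed.

Lemma cindic_inLp {E : set T} : p != 0 -> measurable E -> (m E < +oo)%E ->
  inLp m p (cindic E).
Proof.
move=> p0 mE mE_fin; split; last by rewrite pint_cindic.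
by split; [exact: measurable_indic|exact: measurable_cst].
Qed.

Lemma lpnorm_subC u v :
  lpnorm m p (fun x => u x - v x) = lpnorm m p (fun x => v x - u x).
Proof.
rewrite /lpnorm.
have -> : pint m p (fun x => u x - v x) = pint m p (fun x => v x - u x).
  by apply: eq_integral => x _; rewrite /cabs -complex.normcN opprB.
by [].
Qed.

Lemma pint_sub_disjoint {u v} : p != 0 -> cmeasurable u -> cmeasurable v ->
  {ae m, forall x, u x = 0 \/ v x = 0} ->
  pint m p (fun x => u x - v x) = (pint m p u + pint m p v)%E.
Proof.
move=> p0 mu mv uv; rewrite /pint -ge0_integralD //; last 4 first.
- by move=> x _; rewrite lee_fin powR_ge0.
- exact: measurable_cabs_powR.
- by move=> x _; rewrite lee_fin powR_ge0.
- exact: measurable_cabs_powR.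
apply: ae_eq_integral => //.
- exact/measurable_cabs_powR/cmeasurableB.
- by apply: emeasurable_funD; exact: measurable_cabs_powR.
- apply: filterS uv => x [->|->] _.
    by rewrite sub0r /cabs complex.normcN Normc.normc0 powR0 // add0e.
  by rewrite subr0 /cabs Normc.normc0 powR0 // adde0.
Qed.

Lemma lpnorm_le_sub_disjoint {u v} : 0 < p -> inLp m p u -> inLp m p v ->
  {ae m, forall x, u x = 0 \/ v x = 0} ->
  lpnorm m p u <= lpnorm m p (fun x => u x - v x).
Proof.
move=> p_gt0 [mu u_fin] [mv v_fin] uv.
rewrite /lpnorm pint_sub_disjoint ?gt_eqF //.
have fin_u : pint m p u \is a fin_num.
  by rewrite (ge0_fin_numE (pint_ge0 _)); exact: u_fin.
have fin_v : pint m p v \is a fin_num.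
  by rewrite (ge0_fin_numE (pint_ge0 _)); exact: v_fin.
rewrite (fineD fin_u fin_v); apply: (@ge0_ler_powR _ p^-1).
- by rewrite invr_ge0 ltW.
- by rewrite nnegrE fine_ge0 ?pint_ge0.
- by rewrite nnegrE addr_ge0 ?fine_ge0 ?pint_ge0.
- by rewrite lerDl fine_ge0 ?pint_ge0.
Qed.

End Lp.

Section spatial_realization.
Context {R : realType} {d1 d2 : measure_display}.
Context {X : measurableType d1} {Y : measurableType d2}.
Context {mu : {measure set X -> \bar R}} {nu : {measure set Y -> \bar R}}.
Context {p : R} {s : (X -> Cx R) -> (Y -> Cx R)} {S : set X -> set Y}.
Hypothesis hS : spatial_realization mu nu p s S.

Lemma srealization_measurable {E} : measurable E -> measurable (S E).
Proof. by case: hS => + _ _ _; apply. Qed.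

Lemma srealizationC {E} : measurable E ->
  {ae nu, forall y, S (~` E) y <-> ~ S E y}.
Proof.
move=> mE; case: hS => _ _ [SC _] _.
have mSC := srealization_measurable (measurableC mE).
have mCS := measurableC (srealization_measurable mE).
by apply/(nulleqP nu mSC mCS)/SC.
Qed.

Lemma srealization_bigcup {E : (set X)^nat} : (forall n, measurable (E n)) ->
  {ae nu, forall y, S (\bigcup_n E n) y <-> exists n, S (E n) y}.
Proof.
move=> mE; case: hS => _ _ [_ Sbigcup] _.
have := Sbigcup E mE; rewrite nulleqP.
- by apply: filterS => y ->; split=> [[n _]|[n]]; exists n.
- exact/srealization_measurable/bigcup_measurable.
- by apply: bigcup_measurable => n _; apply: srealization_measurable.
Qed.

Lemma srealizationU {A B} : measurable A -> measurable B ->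
  {ae nu, forall y, S (A `|` B) y <-> S A y \/ S B y}.
Proof.
move=> mA mB; pose E n := if n is 0%N then A else B.
have -> : A `|` B = \bigcup_n E n.
  by apply/seteqP; split=> [x [?|?]|x [[|n] _ ?]];
    [exists 0%N|exists 1%N|left|right].
have mE n : measurable (E n) by case: n.
apply: filterS (srealization_bigcup mE) => y ->.
by split=> [[[|n] ?]|[?|?]]; [left|right|exists 0%N|exists 1%N].
Qed.

Lemma srealizationT : {ae nu, forall y, S setT y}.
Proof.
have := srealizationU measurableT measurable0; rewrite setU0.
have := srealizationC measurableT; rewrite setCT.
apply: filterS2 => y S0 ST; apply/ST.
by have [|/S0] := pselect (S setT y); [left|right].
Qed.

Lemma srealizationI {A B} : measurable A -> measurable B ->
  {ae nu, forall y, S (A `&` B) y <-> S A y /\ S B y}.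
Proof.
move=> mA mB; have -> : A `&` B = ~` (~` A `|` ~` B) by rewrite setCU !setCK.
have mAC := measurableC mA; have mBC := measurableC mB.
apply: filterS2
  (filterI (srealizationC (measurableU _ _ mAC mBC)) (srealizationU mAC mBC))
  (filterI (srealizationC mA) (srealizationC mB)) => y [? ?] [? ?].
by have [] := pselect (S A y); have [] := pselect (S B y); tauto.
Qed.

Lemma srealizationS {A B} : measurable A -> measurable B -> A `<=` B ->
  {ae nu, forall y, S A y -> S B y}.
Proof.
move=> mA mB AB; have := srealizationI mA mB; rewrite (setIidl AB).
by apply: filterS => y SAB /SAB[].
Qed.

Lemma srealization_null {E} : measurable E -> mu E = 0%E ->
  {ae nu, forall y, ~ S E y}.
Proof.
move=> mE E0; case: hS => _ [Sinj _ _] _ _.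
have : nulleq mu E set0 by rewrite /nulleq setD0 set0D setU0.
have mSE := srealization_measurable mE.
have mS0 := srealization_measurable measurable0.
move=> /Sinj-/(_ mE measurable0)/(nulleqP nu mSE mS0).
have := srealizationC measurableT; rewrite setCT.
by apply: filterS3 srealizationT => y ST S0 SE /SE /S0.
Qed.

Lemma srealization_cindic_eq0 {E} : p != 0 -> measurable E -> (mu E < +oo)%E ->
  {ae nu, forall y, ~ S E y -> s (cindic E) y = 0}.
Proof.
(* [S_*] maps [{Re 1_E = 0} = ~E] to [{Re eta = 0}] and [{Im 1_E = 0} = X]
   to [{Im eta = 0}], so [eta], hence [s 1_E = g h^(1/p) eta], vanishes
   off [S E]. *)
move=> p0 mE mE_fin; case: hS => _ _ _ [g [h [_ _ _ _ s_eq]]].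
have [eta [[mRe mIm] Seta] s_eta] :=
  s_eq _ (cindic_inLp (m := mu) p0 mE mE_fin).
have [SRe SIm] := Seta [set 0] (measurable_set1 0).
have ReE : (fun x => complex.Re (cindic E x : Cx R)) @^-1` [set 0] = ~` E.
  apply/seteqP; split => x /=; rewrite /cindic indicE.
    by move=> + Ex; rewrite mem_set //= => /eqP; rewrite oner_eq0.
  by move=> nEx; rewrite memNset.
have ImE : (fun x => complex.Im (cindic E x : Cx R)) @^-1` [set 0] = setT.
  by apply/seteqP; split.
have mRe0 := mRe measurableT _ (measurable_set1 0); rewrite setTI in mRe0.
have mIm0 := mIm measurableT _ (measurable_set1 0); rewrite setTI in mIm0.
move: SRe SIm; rewrite ReE ImE.
move=> /(nulleqP nu mRe0 (srealization_measurable (measurableC mE))) SRe.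
move=> /(nulleqP nu mIm0 (srealization_measurable measurableT)) SIm.
apply: filterS3 (filterI SRe SIm) (filterI (srealizationC mE) srealizationT)
  s_eta => y [/= Re0 Im0] [SC ST] -> /SC /Re0.2 eta_re.
have -> : eta y = 0 by move: eta_re (Im0.2 ST); case: (eta y) => a b /= -> ->.
by rewrite mulr0.
Qed.

End spatial_realization.

Section close_srealizations.
Context {R : realType} {d1 d2 : measure_display}.
Context {X : measurableType d1} {Y : measurableType d2}.
Context {mu : {measure set X -> \bar R}} {nu : {measure set Y -> \bar R}}.
Context {p : R} {sa sb : (X -> Cx R) -> (Y -> Cx R)} {Sa Sb : set X -> set Y}.
Hypotheses (p_gt0 : 0 < p) (mu_sfinite : sigma_finite setT mu).
Hypotheses (isoa : surj_isometry mu nu p sa) (isob : surj_isometry mu nu p sb).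
Hypotheses (hSa : spatial_realization mu nu p sa Sa)
  (hSb : spatial_realization mu nu p sb Sb).
Hypothesis sa_sb_close : forall f, inLp mu p f ->
  lpnorm nu p (fun y => sa f y - sb f y) <= 2^-1 * lpnorm mu p f.

(* With disjoint supports, [sa 1_G - sb 1_G] has norm at least
   [||sa 1_G|| = ||1_G||], against the bound [||1_G|| / 2]. *)
Lemma close_srealizations_disjoint_measure0 G : measurable G ->
  (mu G < +oo)%E -> {ae nu, forall y, ~ (Sa G y /\ Sb G y)} -> mu G = 0%E.
Proof.
move=> mG mG_fin SaSb; have p0 : p != 0 by rewrite gt_eqF.
have iG := cindic_inLp (m := mu) p0 mG mG_fin.
case: isoa => sa_Lp _ _ sa_iso _; case: isob => sb_Lp _ _ _ _.
have disj : {ae nu, forall y, sa (cindic G) y = 0 \/ sb (cindic G) y = 0}.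
  apply: filterS3 SaSb (srealization_cindic_eq0 hSa p0 mG mG_fin)
    (srealization_cindic_eq0 hSb p0 mG mG_fin) => y nSaSb Sa0 Sb0.
  by have [/Sa0|/Sb0] := (not_andP _ _).1 nSaSb; [left|right].
have := lpnorm_le_sub_disjoint p_gt0 (sa_Lp _ iG) (sb_Lp _ iG) disj.
rewrite sa_iso // => /le_trans/(_ (sa_sb_close _ iG)).
rewrite /lpnorm pint_cindic // => le_half.
have : fine (mu G) `^ p^-1 = 0 by have := powR_ge0 (fine (mu G)) p^-1; lra.
by move/powR_eq0_eq0/eqP; rewrite fine_eq0 ?ge0_fin_numE // => /eqP.
Qed.

Lemma close_srealizations_setD {E} : measurable E -> nu (Sa E `\` Sb E) = 0%E.
Proof.
move=> mE; have [A AT mA_fin] := mu_sfinite.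
have mA n : measurable (A n) by case: (mA_fin n).
have mF : measurable (Sa E `\` Sb E).
  exact: measurableD (srealization_measurable hSa mE)
                     (srealization_measurable hSb mE).
have [E0 mE0] : exists2 E0, measurable E0 & nulleq nu (Sa E0) (Sa E `\` Sb E).
  by case: hSa => _ [_ _ Sa_onto] _ _; apply: Sa_onto.
move=> /(nulleqP nu (srealization_measurable hSa mE0) mF) SaE0.
pose G n := E0 `&` E `&` A n.
have mG n : measurable (G n) by apply: measurableI; [apply: measurableI|].
have SaG n :
    {ae nu, forall y, Sa (G n) y <-> (Sa E0 y /\ Sa E y) /\ Sa (A n) y}.
  apply: filterS2 (srealizationI hSa (measurableI _ _ mE0 mE) (mA n))
    (srealizationI hSa mE0 mE) => y -> SaE0E.
  by rewrite SaE0E.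
have G0 n : mu (G n) = 0%E.
  apply: close_srealizations_disjoint_measure0 (mG n) _ _.
    apply: le_lt_trans (mA_fin n).2.
    by apply: le_measure; rewrite ?inE // => x [].
  have SbGE := srealizationS hSb (mG n) mE (fun x Gx => Gx.1.2).
  apply: filterS3 (SaG n) SaE0 SbGE => y -> E0F SbGEy [[[/E0F [_ nSbE] _] _]].
  by move/SbGEy.
apply: measure0_ae_notin mF _.
have SaA := srealization_bigcup hSa mA; rewrite -AT in SaA.
have SaG_null n := srealization_null hSa (mG n) (G0 n).
apply: filterS3 (filterI SaE0 (srealizationT hSa)) SaA
  (filterI (ae_foralln SaG) (ae_foralln SaG_null))
  => y [E0F STy] SaAy [SaGn nSaG] Fy.
have [n Sa_An] := SaAy.1 STy.
apply: (nSaG n); apply/SaGn; split=> //; split; [exact/E0F|exact: Fy.1].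
Qed.

End close_srealizations.

Lemma close_srealizations_nulleq {R : realType} {d1 d2 : measure_display}
    {X : measurableType d1} {Y : measurableType d2}
    {mu : {measure set X -> \bar R}} {nu : {measure set Y -> \bar R}} {p : R}
    {sa sb : (X -> Cx R) -> (Y -> Cx R)} {Sa Sb : set X -> set Y} :
  0 < p -> sigma_finite setT mu ->
  surj_isometry mu nu p sa -> surj_isometry mu nu p sb ->
  spatial_realization mu nu p sa Sa -> spatial_realization mu nu p sb Sb ->
  (forall f, inLp mu p f ->
     lpnorm nu p (fun y => sa f y - sb f y) <= 2^-1 * lpnorm mu p f) ->
  forall E, measurable E -> nulleq nu (Sa E) (Sb E).
Proof.
move=> p_gt0 mu_sfinite isoa isob hSa hSb close E mE.
have close' f : inLp mu p f ->
    lpnorm nu p (fun y => sb f y - sa f y) <= 2^-1 * lpnorm mu p f.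
  by rewrite lpnorm_subC; apply: close.
have mSa := srealization_measurable hSa mE.
have mSb := srealization_measurable hSb mE.
have : (nu (Sa E `\` Sb E `|` Sb E `\` Sa E) <=
    nu (Sa E `\` Sb E) + nu (Sb E `\` Sa E))%E.
  exact: measureU2 (measurableD mSa mSb) (measurableD mSb mSa).
rewrite (close_srealizations_setD p_gt0 mu_sfinite isoa isob hSa hSb close mE).
rewrite (close_srealizations_setD p_gt0 mu_sfinite isob isoa hSb hSa close' mE).
by rewrite adde0 measure_le0 => /eqP.
Qed.

Lemma unit_interval_chain {R : realType} (P : R -> R -> Prop) :
  (forall a b, 0 <= a <= 1 -> 0 <= b <= 1 -> P a b -> P b a) ->
  (forall a b c, 0 <= a <= 1 -> 0 <= b <= 1 -> 0 <= c <= 1 ->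
     P a b -> P b c -> P a c) ->
  (forall c, 0 <= c <= 1 -> exists2 delta : R, 0 < delta &
     forall l, 0 <= l <= 1 -> `|c - l| < delta -> P c l) ->
  P 0 1.
Proof.
move=> Psym Ptrans Plocal.
have I0 : 0 <= (0 : R) <= 1 by rewrite lexx ler01.
pose A := [set t : R | 0 <= t <= 1 /\ P 0 t].
have A0 : A 0.
  split=> //; have [delta delta_gt0 P0] := Plocal 0 I0.
  by apply: P0 => //; rewrite subrr normr0.
have A_sup : has_sup A by split; [exists 0|exists 1 => t [/andP[_ ->]]].
pose c := sup A.
have Ic : 0 <= c <= 1.
  apply/andP; split; first exact: sup_upper_bound.
  by apply: ge_sup => [|t [/andP[_ ->]]]; first exists 0.
have [delta delta_gt0 Pc] := Plocal c Ic.
have [t [It P0t] ct] := sup_adherent delta_gt0 A_sup.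
have tc : t <= c by apply: sup_upper_bound.
have P0c : P 0 c.
  apply: Ptrans I0 It Ic P0t (Psym _ _ Ic It (Pc _ It _)).
  by rewrite ger0_norm ?subr_ge0 //; rewrite -/c in ct; lra.
have P0near l : 0 <= l <= 1 -> `|c - l| < delta -> P 0 l.
  by move=> Il cl; apply: Ptrans I0 Ic Il P0c (Pc _ Il cl).
have [c_delta|c_delta] := lerP 1 (c + delta / 2).
  apply: P0near; first by rewrite ler01 lexx.
  by rewrite ler0_norm; [lra|move: Ic => /andP[]; lra].
have Icd : 0 <= c + delta / 2 <= 1.
  by apply/andP; split; move: Ic => /andP[]; lra.
have : A (c + delta / 2).
  split=> //; apply: P0near Icd _.
  by rewrite ltr_norml; apply/andP; split; lra.
by move/(sup_upper_bound A_sup); rewrite -/c; lra.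
Qed.

(* [p != 2] and the sigma-finiteness of [nu] are what Lamperti's theorem needs
   to produce the spatial realizations, which are given here. *)
Theorem lemma6p22 (R : realType) (d1 d2 : measure_display)
  (X : measurableType d1) (Y : measurableType d2)
  (mu : {measure set X -> \bar R}) (nu : {measure set Y -> \bar R})
  (p : R) (s : R -> (X -> Cx R) -> (Y -> Cx R)) (S : R -> set X -> set Y) :
  1 <= p -> p != 2 ->
  sigma_finite setT mu -> sigma_finite setT nu ->
  (forall l, 0 <= l <= 1 -> surj_isometry mu nu p (s l)) ->
  norm_continuous_path mu nu p s ->
  (forall l, 0 <= l <= 1 -> spatial_realization mu nu p (s l) (S l)) ->
  forall E, measurable E -> nulleq nu (S 0 E) (S 1 E).
Proof.
move=> p_ge1 _ mu_sfinite _ iso s_cont hS.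
have p_gt0 : 0 < p by lra.
have half_gt0 : 0 < 2^-1 :> R by rewrite invr_gt0.
apply: (unit_interval_chain (fun a b =>
  forall E, measurable E -> nulleq nu (S a E) (S b E))).
- by move=> a b _ _ Sab E mE; apply/(nulleq_sym nu)/Sab.
- move=> a b c Ia Ib Ic Sab Sbc E mE.
  apply: (nulleq_trans nu (srealization_measurable (hS a Ia) mE)
    (srealization_measurable (hS b Ib) mE)
    (srealization_measurable (hS c Ic) mE)); [exact: Sab|exact: Sbc].
- move=> c Ic; have [delta delta_gt0 close] := s_cont c Ic _ half_gt0.
  exists delta => // l Il cl.
  apply: close_srealizations_nulleq p_gt0 mu_sfinite (iso c Ic) (iso l Il)
    (hS c Ic) (hS l Il) _ => f; exact: close.
Qed.
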